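(* Let $\mathbb{F}$ be a finite field of characteristic $2$ and let $\ell,r,h$ be positive integers. Let $S=\{\alpha_{i,s}\}_{i\in[\ell],s\in[r+1]}$ be a multi-set of $\ell(r+1)$ elements of $\mathbb{F}$. Let $\mathcal{C}(S,r,h)\subseteq\mathbb{F}^{\ell(r+1)}$ be the set of vectors $(x_{i,s})_{i\in[\ell],s\in[r+1]}$ satisfying $\sum_{i=1}^{\ell}\sum_{s=1}^{r+1}\alpha_{i,s}^{2^{j-1}}x_{i,s}=0$ for $j=1,\ldots,h$, and $\sum_{s=1}^{r+1}x_{i,s}=0$ for $i=1,\ldots,\ell$. Let ${\bf e}\in[r+1]^\ell$ and let $\mathcal{C}^{-{\bf e}}$ be the code obtained by puncturing $\mathcal{C}(S,r,h)$ in the positions $\{(i,{\bf e}(i))\}_{i=1}^{\ell}$ (i.e. deleting these $\ell$ coordinates). Then $\mathcal{C}^{-{\bf e}}$ is an MDS code with parameters $[\ell r,\ell r-h]$ (i.e. of minimum distance $h+1$) if and only if the multi-set $T(S,{\bf e})=\{\alpha_{i,s}+\alpha_{i,{\bf e}(i)}\}_{i\in[\ell],\,s\in[r+1]\setminus\{{\bf e}(i)\}}$ is $h$-wise independent over $\mathbb{F}_2$.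
   Context: A multi-set $T\subseteq\mathbb{F}$ is $h$-wise independent over $\mathbb{F}_2$ if every sub-multi-set of $T$ of size at most $h$ is linearly independent over $\mathbb{F}_2$. *)

From HB Require Import structures.
From mathcomp Require Import all_boot all_order all_algebra.
Set Implicit Arguments. Unset Strict Implicit. Unset Printing Implicit Defensive.
Import GRing.Theory.
Local Open Scope ring_scope.

Section Defs.
Variable F : finFieldType.

Definition coord_t (l r : nat) := ('I_l * 'I_r.+1)%type.

(* The code C(S,r,h): alpha i s = alpha_{i,s}; index j : 'I_h stands for j+1. *)
Definition codeC (l r h : nat) (alpha : 'I_l -> 'I_r.+1 -> F)
  : {set {ffun coord_t l r -> F}} :=
  [set x : {ffun coord_t l r -> F} |
     [forall j : 'I_h, \sum_(p : coord_t l r) (alpha p.1 p.2) ^+ (2 ^ j) * x p == 0]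
     && [forall i : 'I_l, \sum_(s : 'I_r.+1) x (i, s) == 0]].

Definition kept_pos (l r : nat) (e : 'I_l -> 'I_r.+1) :=
  {p : coord_t l r | p.2 != e p.1}.

Definition restrict (l r : nat) (e : 'I_l -> 'I_r.+1) (x : {ffun coord_t l r -> F})
  : {ffun kept_pos e -> F} := [ffun p => x (val p)].

Definition punctured (l r : nat) (e : 'I_l -> 'I_r.+1)
  (C : {set {ffun coord_t l r -> F}}) : {set {ffun kept_pos e -> F}} :=
  [set y | [exists x in C, y == restrict e x]].

Definition wt (I : finType) (y : {ffun I -> F}) : nat := #|[set p | y p != 0]|.

(* C is an MDS code [n, n-h] of minimum distance h+1, n = #|I|:
   dimension n - h (i.e. |C| = |F|^(n-h)) and every nonzero codeword has
   weight >= h+1 (Singleton gives equality). *)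
Definition MDS_n_nmh (I : finType) (h : nat) (C : {set {ffun I -> F}}) : Prop :=
  #|C| = (#|F| ^ (#|I| - h))%N /\
  forall c, c \in C -> c != 0 -> (h.+1 <= wt c)%N.

(* The sub-multiset {t p : p in A} is linearly independent over F_2:
   no nontrivial F_2-combination (= sum over a nonempty subfamily) vanishes. *)
Definition F2_indep (I : finType) (t : I -> F) (A : {set I}) : Prop :=
  forall B : {set I}, B \subset A -> B != set0 -> \sum_(p in B) t p != 0.

Definition hwise_indep (I : finType) (h : nat) (t : I -> F) : Prop :=
  forall A : {set I}, (#|A| <= h)%N -> F2_indep t A.

Definition Tse (l r : nat) (alpha : 'I_l -> 'I_r.+1 -> F) (e : 'I_l -> 'I_r.+1)
  (p : kept_pos e) : F :=
  alpha (val p).1 (val p).2 + alpha (val p).1 (e (val p).1).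

End Defs.

(* Puncturing at (i, e i) and using the row-sum constraints (in characteristic 2
   the punctured entry equals the sum of the rest of its row, and x ^+ 2 ^ j is
   additive) identifies the punctured code with the kernel of the parity checks
   H = (t_p ^ 2 ^ j)_{j < h}, where t = T(S, e).  Such a kernel has dimension at
   least n - h, and the Singleton bound makes it an [n, n - h] MDS code as soon
   as its minimum weight exceeds h.  An F_2-dependency among at most h of the
   t_p gives a codeword of weight at most h (an indicator vector).  Conversely,
   a nonzero codeword c of weight at most h is turned into an F_2-dependency by
   induction on its support: if c is not constant on its support, c (c - c_q)
   (q in the support) is a shorter codeword for the checks built from the
   squares t_p ^ 2, and squaring is injective; if it is constant, the check
   j = 0 is the dependency. *)
From mathcomp Require Import all_boot all_order all_algebra zify.
Set Implicit Arguments. Unset Strict Implicit.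
Import GRing.Theory.
Local Open Scope ring_scope.

Section Char2.
Variable R : idomainType.
Hypothesis char2 : (2 \in [pchar R])%N.

Lemma expr2nD (j : nat) (x y : R) : (x + y) ^+ (2 ^ j) = x ^+ (2 ^ j) + y ^+ (2 ^ j).
Proof. by rewrite exprDn_pchar // pnatX pnatE // char2. Qed.

Lemma expr2n_sum (j : nat) (I : Type) (s : seq I) (P : pred I) (f : I -> R) :
  (\sum_(i <- s | P i) f i) ^+ (2 ^ j) = \sum_(i <- s | P i) f i ^+ (2 ^ j).
Proof. by apply: (big_morph _ (expr2nD j)); rewrite expr0n expn_eq0. Qed.

Lemma frobenius_relations_square {I : finType} {k : nat} {t c : I -> R} (a : R) :
  (forall j, (j < k.+1)%N -> \sum_p c p * t p ^+ (2 ^ j) = 0) ->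
  forall j, (j < k)%N -> \sum_p c p * (c p - a) * (t p ^+ 2) ^+ (2 ^ j) = 0.
Proof.
move=> rel j ltjk.
have : (\sum_p c p * t p ^+ (2 ^ j)) ^+ 2 - a * \sum_p c p * t p ^+ (2 ^ j.+1) = 0.
  by rewrite (rel j (leqW ltjk)) (rel j.+1 ltjk) expr0n mulr0 subr0.
rewrite (expr2n_sum 1) mulr_sumr -sumrB => H; rewrite -[RHS]H.
apply: eq_bigr => p _.
rewrite -exprM -expnS exprMn -exprM mulnC -expnS.
by rewrite expr2 mulrBr mulrBl [c p * a]mulrC mulrA.
Qed.

Lemma zero_subsum_of_frobenius_relations {I : finType} {k : nat} {t c : I -> R} :
  leq #|[set p | c p != 0]| k -> (exists p, c p != 0) ->
  (forall j, (j < k)%N -> \sum_p c p * t p ^+ (2 ^ j) = 0) ->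
  exists B : {set I},
    [/\ B \subset [set p | c p != 0], B != set0 & \sum_(p in B) t p = 0].
Proof.
elim: k t c => [|k IHk] t c suppk [p1 cp1] rel.
  by move: suppk; rewrite leqn0 cards_eq0 => /eqP/setP/(_ p1); rewrite !inE cp1.
set S := [set p | c p != 0].
have [p2 /andP [cp2 cp21] | const_c] := pickP [pred p | (c p != 0) && (c p != c p1)].
  pose d p := c p * (c p - c p1).
  have supp_d : [set p | d p != 0] \subset S :\ p1.
    apply/subsetP => p; rewrite !inE mulf_eq0 subr_eq0 negb_or => /andP [cp cpp1].
    by rewrite cp andbT; apply: contraNneq cpp1 => ->.
  have [||B [BSd B0 sumB]] := IHk (fun p => t p ^+ 2) d _ _ (frobenius_relations_square (c p1) rel).
  - by apply: leq_trans (subset_leq_card supp_d) _; rewrite (cardsD1 p1) inE cp1 in suppk.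
  - by exists p2; rewrite /d mulf_neq0 // subr_eq0.
  exists B; split => //; first by rewrite (subset_trans BSd) // (subset_trans supp_d) ?subD1set.
  by move: sumB; rewrite -(expr2n_sum 1) => /eqP; rewrite expf_eq0 => /andP [_ /eqP].
exists S; split => //; first by apply/set0Pn; exists p1; rewrite inE.
have := rel 0%N isT; rewrite expn0 (bigID (mem S)) /= [X in _ + X]big1 => [|p]; last first.
  by rewrite inE negbK => /eqP->; rewrite mul0r.
rewrite addr0 (eq_bigr (fun p => c p1 * t p)) => [|p]; last first.
  by rewrite inE => cp; have := const_c p; rewrite /= cp => /negbFE/eqP->; rewrite expr1.
by rewrite -mulr_sumr => /eqP; rewrite mulf_eq0 (negbTE cp1) => /eqP.
Qed.

End Char2.

Section LinearCodes.
Variable F : finFieldType.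

Lemma singleton_bound (I : finType) (h : nat) (C : {set {ffun I -> F}}) :
  {in C &, forall y z, y != z -> (h < wt (y - z)%R)%N} ->
  (#|C| <= #|F| ^ (#|I| - h))%N.
Proof.
move=> dist.
pose A : {set I} := [set p in take h (enum I)].
have cardA : #|A| = minn h #|I|.
  rewrite cardsE (card_uniqP _) ?take_uniq ?enum_uniq // size_take_min.
  by rewrite -cardE minnC.
pose rho (y : {ffun I -> F}) : {ffun {p | p \notin A} -> F} := [ffun q => y (val q)].
have rho_inj : {in C &, injective rho}.
  move=> y z yC zC /ffunP rhoyz; apply/eqP/negPn/negP => /(dist y z yC zC).
  apply/negP; rewrite -leqNgt (leq_trans _ (geq_minl h #|I|)) // -cardA.
  apply/subset_leq_card/subsetP => p; rewrite inE; apply: contraR => pA.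
  by have := rhoyz (exist _ p pA); rewrite !ffunE => ->; rewrite subrr.
rewrite -(card_in_imset rho_inj) (leq_trans (max_card _)) // card_ffun card_sig.
have -> : #|[pred p | p \notin A]| = #|[predC A]| by apply: eq_card.
suff -> : #|[predC A]| = (#|I| - h)%N by [].
by move: (cardC A); rewrite cardA; lia.
Qed.

Lemma card_kernel_ge (I J : finType) (f : {ffun I -> F} -> {ffun J -> F}) :
  {morph f : y z / y - z} ->
  (#|F| ^ #|I| <= #|F| ^ #|J| * #|[set y | f y == 0%R]|)%N.
Proof.
move=> fB.
pose rep v := odflt 0 [pick y | f y == v].
have rep_ker y : f (y - rep (f y)) == 0.
  by rewrite fB /rep; case: pickP => [z /eqP -> | /(_ y)]; rewrite ?subrr ?eqxx.
have split_inj : injective (fun y => (f y, y - rep (f y))).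
  by move=> y z [fyz]; rewrite fyz => /addIr.
have /subset_leq_card : [set (f y, y - rep (f y)) | y in setT]
    \subset setX setT [set y | f y == 0].
  by apply/subsetP => _ /imsetP [y _ ->]; rewrite !inE /= rep_ker.
by rewrite cardsX (card_imset _ split_inj) !cardsT !card_ffun.
Qed.

Lemma card_kernel_mds (I : finType) (h : nat) (f : {ffun I -> F} -> {ffun 'I_h -> F}) :
  {morph f : y z / y - z} ->
  (forall c, f c = 0 -> c != 0 -> (h < wt c)%N) ->
  #|[set c | f c == 0]| = (#|F| ^ (#|I| - h))%N.
Proof.
move=> fB minwt; set K := [set c | _].
apply/eqP; rewrite eqn_leq singleton_bound /=; last first.
  move=> y z; rewrite !inE => /eqP fy /eqP fz; rewrite -subr_eq0; apply: minwt.
  by rewrite fB fy fz subrr.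
have [hI | /ltnW] := leqP h #|I|.
  have F_gt0 : (0 < #|F|)%N by apply/card_gt0P; exists 0.
  rewrite -(@leq_pmul2l (#|F| ^ h)) ?expn_gt0 ?F_gt0 //.
  by rewrite -expnD subnKC // -{1}[h]card_ord card_kernel_ge.
rewrite -subn_eq0 => /eqP-> ; rewrite expn0 card_gt0; apply/set0Pn; exists 0.
by rewrite inE -(subrr 0) fB subrr.
Qed.

Definition indicator (I : finType) (B : {set I}) : {ffun I -> F} := [ffun p => (p \in B)%:R].

Lemma wt_indicator (I : finType) (B : {set I}) : wt (indicator B) = #|B|.
Proof.
by apply: eq_card => p; rewrite inE ffunE; case: (p \in B); rewrite ?oner_eq0 ?eqxx.
Qed.

Lemma indicator_eq0 (I : finType) (B : {set I}) : (indicator B == 0) = (B == set0).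
Proof.
apply/eqP/eqP => [/ffunP B0 | ->]; last by apply/ffunP => p; rewrite !ffunE inE.
apply/setP => p; have := B0 p; rewrite !ffunE inE.
by case: (p \in B) => // /eqP; rewrite oner_eq0.
Qed.

End LinearCodes.

Arguments indicator {F I} B.

Section PuncturedCode.
Variables (F : finFieldType) (l r h : nat).
Variables (alpha : 'I_l -> 'I_r.+1 -> F) (e : 'I_l -> 'I_r.+1).
Hypothesis char2 : (2 \in [pchar F])%N.
Local Notation I := (kept_pos e).
Local Notation t := (@Tse F l r alpha e).

Definition syndrome (y : {ffun I -> F}) : {ffun 'I_h -> F} :=
  [ffun j : 'I_h => \sum_p t p ^+ (2 ^ j) * y p].

Lemma syndromeB : {morph syndrome : y z / y - z}.
Proof.
move=> y z; apply/ffunP => j; rewrite !ffunE -sumrB.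
by apply: eq_bigr => p _; rewrite !ffunE mulrBr.
Qed.

Lemma syndrome_eq0 (y : {ffun I -> F}) :
  (syndrome y == 0) = [forall j : 'I_h, \sum_p t p ^+ (2 ^ j) * y p == 0].
Proof.
apply/eqP/forallP => [/ffunP sy0 j | sy0]; last apply/ffunP => j.
  by have := sy0 j; rewrite !ffunE => ->.
by rewrite !ffunE; apply/eqP.
Qed.

Lemma codeC_relationE (x : {ffun coord_t l r -> F}) (j : nat) :
  (forall i, \sum_s x (i, s) = 0) ->
  \sum_(q : coord_t l r) alpha q.1 q.2 ^+ (2 ^ j) * x q
    = \sum_(p : I) t p ^+ (2 ^ j) * x (val p).
Proof.
move=> row0.
rewrite -(big_sub [pred q : coord_t l r | q.2 != e q.1]
  (fun q => (alpha q.1 q.2 + alpha q.1 (e q.1)) ^+ (2 ^ j) * x q)).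
have -> : \sum_(q : coord_t l r) alpha q.1 q.2 ^+ (2 ^ j) * x q
    = \sum_i \sum_s alpha i s ^+ (2 ^ j) * x (i, s).
  by rewrite pair_big; apply: eq_bigr => -[i s].
have -> : \sum_(q in [pred q : coord_t l r | q.2 != e q.1])
      (alpha q.1 q.2 + alpha q.1 (e q.1)) ^+ (2 ^ j) * x q
    = \sum_i \sum_(s | s != e i) (alpha i s + alpha i (e i)) ^+ (2 ^ j) * x (i, s).
  by rewrite pair_big_dep; apply: eq_big => -[i s].
apply: eq_bigr => i _.
have xie : x (i, e i) = \sum_(s | s != e i) x (i, s).
  by move: (row0 i); rewrite (bigD1 (e i)) //= => /addr0_eq <-; rewrite oppr_pchar2.
rewrite (bigD1 (e i)) //= xie mulr_sumr addrC -big_split /=.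
by apply: eq_bigr => s _; rewrite expr2nD // mulrDl.
Qed.

Definition zero_extend (y : {ffun I -> F}) (q : coord_t l r) : F := oapp y 0 (insub q).

Definition extend (y : {ffun I -> F}) : {ffun coord_t l r -> F} :=
  [ffun q => if q.2 == e q.1 then \sum_s zero_extend y (q.1, s) else zero_extend y q].

Lemma extend_val (y : {ffun I -> F}) (p : I) : extend y (val p) = y p.
Proof. by rewrite ffunE (negbTE (valP p)) /zero_extend valK. Qed.

Lemma extend_row_sum (y : {ffun I -> F}) (i : 'I_l) : \sum_s extend y (i, s) = 0.
Proof.
have y_ie : zero_extend y (i, e i) = 0 by rewrite /zero_extend insubF //= eqxx.
rewrite (bigD1 (e i)) //= ffunE eqxx (bigD1 (e i)) //= y_ie add0r.
rewrite [X in _ + X](eq_bigr (fun s => zero_extend y (i, s))) => [|s /negbTE sei].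
  exact: addrr_pchar2.
by rewrite ffunE /= sei.
Qed.

Lemma punctured_codeC :
  punctured e (codeC h alpha) = [set y | syndrome y == 0].
Proof.
apply/setP => y; rewrite !inE syndrome_eq0.
apply/existsP/forallP => [[x /andP [xC /eqP ->]] j | sy0].
  move: xC; rewrite inE => /andP [/forallP rel /forallP row0].
  under eq_bigr do rewrite ffunE.
  by rewrite -codeC_relationE // => i; apply/eqP.
exists (extend y); apply/andP; split; last first.
  by apply/eqP/ffunP => p; rewrite ffunE extend_val.
rewrite inE; apply/andP; split; last by apply/forallP => i; rewrite extend_row_sum.
apply/forallP => j; rewrite codeC_relationE; last exact: extend_row_sum.
by under eq_bigr do rewrite extend_val; exact: sy0.
Qed.

Lemma syndrome_indicator_eq0 (B : {set I}) :
  \sum_(p in B) t p = 0 -> syndrome (indicator B) = 0.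
Proof.
move=> sumB0; apply/ffunP => j; rewrite !ffunE big_mkcond /=.
rewrite (eq_bigr (fun p => if p \in B then t p ^+ (2 ^ j) else 0)) => [|p _].
  by rewrite -big_mkcond -expr2n_sum // sumB0 expr0n expn_eq0.
by rewrite ffunE mulr_natr mulrb.
Qed.

Lemma hwise_indep_min_weight :
  hwise_indep h t -> forall c, syndrome c = 0 -> c != 0 -> (h < wt c)%N.
Proof.
move=> indep c /eqP; rewrite syndrome_eq0 => /forallP sc0 c0; rewrite ltnNge.
apply/negP => wtc.
have [p cp] : exists p, c p != 0.
  apply/existsP; apply: contraNT c0 => /existsPn c0.
  by apply/eqP/ffunP => q; rewrite ffunE; apply/eqP/negPn.
have rel j : (j < h)%N -> \sum_p c p * t p ^+ (2 ^ j) = 0.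
  move=> ltjh; rewrite -[RHS](eqP (sc0 (Ordinal ltjh))).
  by apply: eq_bigr => q _; rewrite mulrC.
have [B [Bc B0 /eqP sumB0]] :=
  zero_subsum_of_frobenius_relations char2 wtc (ex_intro _ p cp) rel.
by have := indep _ wtc B Bc B0; rewrite sumB0.
Qed.

End PuncturedCode.

Theorem proposition10 (F : finFieldType) (char2 : (2 \in [pchar F])%N)
  (l r h : nat) (hl : (0 < l)%N) (hr : (0 < r)%N) (hh : (0 < h)%N)
  (alpha : 'I_l -> 'I_r.+1 -> F) (e : 'I_l -> 'I_r.+1) :
  @MDS_n_nmh F (kept_pos e) h (@punctured F l r e (@codeC F l r h alpha))
  <-> @hwise_indep F (kept_pos e) h (@Tse F l r alpha e).
Proof.
rewrite punctured_codeC //; split => [[_ minwt] A cardA B BA B0 | indep].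
  apply/eqP => /(syndrome_indicator_eq0 h char2) sB0.
  have := minwt (indicator B); rewrite inE sB0 eqxx indicator_eq0 wt_indicator.
  by rewrite ltnNge (leq_trans (subset_leq_card BA) cardA) => /(_ isT B0).
split; last by move=> c; rewrite inE => /eqP; exact: hwise_indep_min_weight.
exact: card_kernel_mds (syndromeB h alpha (e := e)) (hwise_indep_min_weight char2 indep).
Qed.
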